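(* Let $a,y\in\mathbb{R}$ and define $$\mathcal{K}(a;x,y,z)=2\exp(2xyz)\,\mathrm{Ai}\big(x^2+y^2+z^2+a/4\big).$$ For each $n=0,1,2,\ldots$ and $\rho\in(0,1)$ there exists a constant $C=C_n(\rho,a,y)>0$ such that $$\Big|\frac{\partial^n\mathcal{K}(a;x,y,z)}{\partial x^n}\Big|<C\exp\Big(-\frac{2\rho}{3}(x^2+z^2)^{3/2}\Big)$$ for all $x,z\in\mathbb{R}$.
   Context: $\mathrm{Ai}$ is the standard Airy function, $\mathrm{Ai}(x)=\frac{1}{2\pi i}\int_{\infty e^{-i\pi/3}}^{\infty e^{i\pi/3}}\exp(\zeta^3/3-\zeta x)\,d\zeta$, the solution of $w''=xw$ decaying as $x\to+\infty$. *)

From Stdlib Require Import Reals.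
From Coquelicot Require Import Coquelicot.
Open Scope R_scope.

(* Airy function Ai, defined by the contour integral
     Ai(x) = 1/(2 pi i) \int_{oo e^{-i pi/3}}^{oo e^{i pi/3}} exp(z^3/3 - z x) dz
   with the contour parametrized as the two rays z = r e^{-i pi/3} (r: oo -> 0)
   and z = r e^{i pi/3} (r: 0 -> oo).  On both rays z^3 = -r^3, and the two
   contributions are complex conjugates, so the integral equals
     (1/pi) \int_0^oo exp(-r^3/3 - x r/2) sin(pi/3 - sqrt 3 x r / 2) dr,
   an absolutely convergent real improper integral. *)
Definition Ai (x : R) : R :=
  / PI * RInt_gen
    (fun r : R => exp (- (r ^ 3) / 3 - x * r / 2) * sin (PI / 3 - sqrt 3 * x * r / 2))
    (at_point 0) (Rbar_locally p_infty).

Definition Kker (a x y z : R) : R :=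
  2 * exp (2 * x * y * z) * Ai (x ^ 2 + y ^ 2 + z ^ 2 + a / 4).

From Stdlib Require Import FunctionalExtensionality.
From Stdlib Require Import Reals Lra.
From Coquelicot Require Import Coquelicot.
Open Scope R_scope.

(* Differentiating [n] times in [x] gives, by induction and the Airy equation [Ai'' = s Ai],
   [exp (2xyz) (P Ai(s) + Q Ai'(s))] with [s = x^2 + y^2 + z^2 + a/4] and [P], [Q] polynomials
   in [x], [z].  Writing [R = sqrt (x^2 + z^2)], the polynomials grow like [exp (O(R))] and
   [exp (2xyz) <= exp (|y| R^2)], while [Ai(s)] and [Ai'(s)/(2 + |s|)] are [O(exp (-2/3 s^(3/2)))]
   with [s^(3/2) >= R^3 - O(R)].  The fraction [1 - rho] of the cubic decay absorbs the rest.
   The decay of [Ai] comes from moving the contour of its integral representation onto the ray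
   through the saddle point [sqrt s], where the integrand is [O(exp (-2/3 s^(3/2) - r^3/3))];
   that of [Ai'] then follows from Taylor's formula and the Airy equation. *)

(* [auto_derive] states its equations over Coquelicot's [R_AbsRing], where [ring] fails. *)
Ltac eq_in_R := match goal with |- ?a = ?b => change (@eq R a b) end.

Lemma is_derive_eq (f : R -> R) x l l' : is_derive f x l -> l = l' -> is_derive f x l'.
Proof. intros H ->. exact H. Qed.

Local Notation at_0 := (at_point 0).
Local Notation at_oo := (Rbar_locally p_infty).

Lemma exp_le_compat x y : x <= y -> exp x <= exp y.
Proof. intros [H| ->]; [left; apply exp_increasing|]; lra. Qed.

(** * Integrals over [0, +oo) of exponentially dominated functions *)

Lemma mul_exp_opp_lt M eps p : 0 <= M -> 0 < eps -> M / eps < p -> M * exp (- p) < eps.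
Proof.
  intros HM Heps Hp.
  assert (HMp : M < eps * p).
  { apply (Rmult_lt_compat_l eps) in Hp; [|lra]. unfold Rdiv in Hp.
    rewrite Rmult_comm, Rmult_assoc, Rinv_l, Rmult_1_r in Hp; lra. }
  assert (Hexp : exp (- p) * (1 + p) <= 1).
  { pose proof (exp_ineq1_le p). pose proof (exp_pos p).
    assert (E : exp (- p) * exp p = 1) by (rewrite <- exp_plus, Rplus_opp_l, exp_0; reflexivity).
    nra. }
  pose proof (exp_pos (- p)). nra.
Qed.

Lemma is_RInt_exp_opp M a b :
  is_RInt (fun r => M * exp (- r)) a b (M * (exp (- a) - exp (- b))).
Proof.
  replace (M * (exp (- a) - exp (- b)))
    with (minus ((fun r => - M * exp (- r)) b) ((fun r => - M * exp (- r)) a))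
    by (unfold minus, plus, opp; simpl; ring).
  apply (@is_RInt_derive R_CompleteNormedModule
           (fun r => - M * exp (- r)) (fun r => M * exp (- r))).
  - intros x _. auto_derive; [auto | ring].
  - intros x _. apply (ex_derive_continuous (V := R_NormedModule)). auto_derive. auto.
Qed.

Lemma exp_dominated_const_ge0 (f : R -> R) M :
  (forall r, 0 <= r -> Rabs (f r) <= M * exp (- r)) -> 0 <= M.
Proof.
  intros Hdom. pose proof (Hdom 0 (Rle_refl 0)) as H. rewrite Ropp_0, exp_0 in H.
  pose proof (Rabs_pos (f 0)). lra.
Qed.

Lemma filterlim_exp_dominated (f : R -> R) M :
  (forall r, 0 <= r -> Rabs (f r) <= M * exp (- r)) -> filterlim f at_oo (locally 0).
Proof.
  intros Hdom. pose proof (exp_dominated_const_ge0 f M Hdom) as HM.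
  apply filterlim_locally. intro eps. pose proof (cond_pos eps).
  exists (M / eps). intros r Hr.
  assert (0 <= M / eps) by (apply Rmult_le_pos; [|left; apply Rinv_0_lt_compat]; lra).
  change (Rabs (f r - 0) < eps). rewrite Rminus_0_r.
  eapply Rle_lt_trans; [apply Hdom; lra | apply mul_exp_opp_lt; lra].
Qed.

Lemma is_RInt_gen_derive_dominated (F f : R -> R) M :
  (forall r, is_derive F r (f r)) -> (forall r, continuous f r) ->
  (forall r, 0 <= r -> Rabs (F r) <= M * exp (- r)) -> is_RInt_gen f at_0 at_oo (- F 0).
Proof.
  intros HF Hf Hdom.
  apply is_RInt_gen_ext with (Derive F).
  { apply filter_forall. intros ab x _. apply is_derive_unique, HF. }
  replace (- F 0) with (0 - F 0) by ring.
  apply is_RInt_gen_Derive.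
  - apply filter_forall. intros ab x _. eexists. apply HF.
  - apply filter_forall. intros ab x _.
    apply continuous_ext with f; [intro; symmetry; apply is_derive_unique, HF | apply Hf].
  - intros P HP. unfold filtermap, at_point. apply locally_singleton. exact HP.
  - exact (filterlim_exp_dominated F M Hdom).
Qed.

Lemma is_RInt_gen_exp_opp M : is_RInt_gen (fun r => M * exp (- r)) at_0 at_oo M.
Proof.
  pose proof (is_RInt_gen_derive_dominated (fun r => - M * exp (- r)) (fun r => M * exp (- r))
    (Rabs M)) as H.
  cbv beta in H. rewrite Ropp_0, exp_0, Rmult_1_r, Ropp_involutive in H. apply H.
  - intro r. auto_derive; [auto | ring].
  - intro r. apply (ex_derive_continuous (V := R_NormedModule)). auto_derive. auto.
  - intros r _. rewrite Rabs_mult, Rabs_Ropp, (Rabs_right (exp _)) by (left; apply exp_pos). lra.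
Qed.

Section ExpDominated.

Variables (f : R -> R) (M : R).
Hypothesis f_dom : forall r, 0 <= r -> Rabs (f r) <= M * exp (- r).
Hypothesis f_cont : forall r, continuous f r.
Lemma RInt_dominated_le p q : 0 <= p <= q -> Rabs (RInt f p q) <= M * exp (- p).
Proof.
  intros Hpq. pose proof (exp_dominated_const_ge0 f M f_dom). pose proof (exp_pos (- q)).
  apply Rle_trans with (M * (exp (- p) - exp (- q))); [|nra].
  apply (norm_RInt_le (V := R_NormedModule) f (fun r => M * exp (- r)) p q); [lra| | |].
  - intros x Hx. apply f_dom. lra.
  - apply (RInt_correct (V := R_CompleteNormedModule)).
    apply (ex_RInt_continuous (V := R_CompleteNormedModule)). intros; apply f_cont.
  - apply is_RInt_exp_opp.
Qed.

Lemma ex_RInt_gen_dominated : ex_RInt_gen f at_0 at_oo.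
Proof.
  pose proof (exp_dominated_const_ge0 f M f_dom) as HM.
  assert (Hex : forall a b, ex_RInt f a b).
  { intros a b. apply (ex_RInt_continuous (V := R_CompleteNormedModule)). intros; apply f_cont. }
  assert (Huniq : filter_prod at_0 at_oo (fun ab : R * R =>
     (exists v, is_RInt f (fst ab) (snd ab) v) /\
     (forall v1 v2, is_RInt f (fst ab) (snd ab) v1 -> is_RInt f (fst ab) (snd ab) v2 -> v1 = v2))).
  { apply filter_forall. intros [a b]. split.
    - exists (RInt f a b). apply (RInt_correct (V := R_CompleteNormedModule)), Hex.
    - intros v1 v2 H1 H2. apply (is_RInt_unique (V := R_CompleteNormedModule)) in H1, H2.
      congruence. }
  apply (proj1 (filterlimi_locally_cauchy (U := R_CompleteSpace) _ Huniq)).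
  intro eps. pose proof (cond_pos eps) as Heps.
  assert (Hcauchy : forall p q, 0 <= p <= q -> M / eps < p ->
            Rabs (RInt f 0 q - RInt f 0 p) < eps).
  { intros p q Hpq Hp.
    assert (E : RInt f 0 q = RInt f 0 p + RInt f p q)
      by (rewrite <- (RInt_Chasles (V := R_CompleteNormedModule) f 0 p q) by apply Hex;
          reflexivity).
    assert (Hsub : forall u v : R, u + v - u = v) by (intros; ring).
    rewrite E, Hsub.
    eapply Rle_lt_trans; [apply RInt_dominated_le; lra | apply mul_exp_opp_lt; lra]. }
  exists (fun ab => fst ab = 0 /\ Rmax 0 (M / eps) < snd ab). split.
  - apply Filter_prod with (fun x => x = 0) (fun y => Rmax 0 (M / eps) < y).
    + reflexivity.
    + exists (Rmax 0 (M / eps)). auto.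
    + intros x y Hx Hy. simpl. auto.
  - intros [a1 b1] [a2 b2] [Ha1 Hb1] [Ha2 Hb2] v1 v2 Hv1 Hv2. simpl in *. subst a1 a2.
    pose proof (Rmax_l 0 (M / eps)). pose proof (Rmax_r 0 (M / eps)).
    apply (is_RInt_unique (V := R_CompleteNormedModule)) in Hv1, Hv2.
    change (Rabs (v2 - v1) < eps). subst v1 v2.
    destruct (Rle_dec b1 b2).
    + apply Hcauchy; lra.
    + rewrite Rabs_minus_sym. apply Hcauchy; lra.
Qed.

Lemma RInt_gen_dominated_le : Rabs (RInt_gen f at_0 at_oo) <= M.
Proof.
  assert (Hpos : filter_prod at_0 at_oo (fun ab => fst ab < snd ab /\ 0 <= fst ab)).
  { apply Filter_prod with (fun x => x = 0) (fun y => 0 < y).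
    - reflexivity.
    - exists 0. auto.
    - intros x y -> Hy. simpl. lra. }
  change (norm (RInt_gen f at_0 at_oo) <= M).
  apply (@RInt_gen_norm R_CompleteNormedModule at_0 at_oo _ _ f (fun r => M * exp (- r))).
  - eapply filter_imp; [|exact Hpos]. intros [a b] [H1 H2]; simpl in *; lra.
  - eapply filter_imp; [|exact Hpos]. intros [a b] [H1 H2] t Ht; simpl in *. apply f_dom. lra.
  - apply (RInt_gen_correct (V := R_CompleteNormedModule)), ex_RInt_gen_dominated.
  - apply is_RInt_gen_exp_opp.
Qed.

End ExpDominated.

(** * Differentiation under the integral sign *)

Lemma mvt_abs_le (f df : R -> R) a b K : (forall t, is_derive f t (df t)) ->
  (forall t, Rmin a b <= t <= Rmax a b -> Rabs (df t) <= K) ->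
  Rabs (f b - f a) <= K * Rabs (b - a).
Proof.
  intros Hd Hb.
  destruct (MVT_gen f a b df) as [c [Hc ->]].
  - intros; apply Hd.
  - intros x _. apply derivable_continuous_pt. exists (df x). apply is_derive_Reals, Hd.
  - rewrite Rabs_mult. apply Rmult_le_compat_r; [apply Rabs_pos | apply Hb, Hc].
Qed.

Lemma taylor2_abs_le (f f1 f2 : R -> R) s h K :
  (forall t, is_derive f t (f1 t)) -> (forall t, is_derive f1 t (f2 t)) ->
  (forall t, Rmin s (s + h) <= t <= Rmax s (s + h) -> Rabs (f2 t) <= K) ->
  Rabs (f (s + h) - f s - h * f1 s) <= K * h ^ 2.
Proof.
  intros H1 H2 HK.
  assert (Hseg : forall t u, Rmin s (s + h) <= t <= Rmax s (s + h) ->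
            Rmin s t <= u <= Rmax s t -> Rmin s (s + h) <= u <= Rmax s (s + h)).
  { intros t u. unfold Rmin, Rmax. destruct (Rle_dec s (s + h)), (Rle_dec s t); lra. }
  assert (Hf1 : forall t, Rmin s (s + h) <= t <= Rmax s (s + h) ->
            Rabs (f1 t - f1 s) <= K * Rabs h).
  { intros t Ht.
    apply Rle_trans with (K * Rabs (t - s)).
    - apply mvt_abs_le with f2; [exact H2 | intros u Hu; apply HK, (Hseg t u Ht Hu)].
    - assert (HK0 : 0 <= K) by (eapply Rle_trans; [apply Rabs_pos | apply (HK t Ht)]).
      apply Rmult_le_compat_l; [exact HK0|].
      revert Ht. unfold Rmin, Rmax, Rabs.
      destruct (Rle_dec s (s + h)); repeat destruct Rcase_abs; lra. }
  set (phi := fun t => f t - t * f1 s).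
  replace (f (s + h) - f s - h * f1 s) with (phi (s + h) - phi s) by (unfold phi; ring).
  replace (K * h ^ 2) with ((K * Rabs h) * Rabs (s + h - s))
    by (replace (s + h - s) with h by ring; rewrite <- (pow2_abs h); ring).
  apply mvt_abs_le with (fun t => f1 t - f1 s); [|exact Hf1].
  intro t. unfold phi.
  apply (is_derive_minus f (fun t => t * f1 s)); [apply H1 | auto_derive; [auto | ring]].
Qed.

Lemma is_derive_quadratic_remainder (F : R -> R) s L M :
  (forall h, Rabs h <= 1 -> Rabs (F (s + h) - F s - h * L) <= M * h ^ 2) ->
  is_derive F s L.
Proof.
  intros Hrem.
  assert (HM : 0 <= M).
  { specialize (Hrem 1 ltac:(rewrite Rabs_R1; lra)).
    pose proof (Rabs_pos (F (s + 1) - F s - 1 * L)). lra. }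
  apply is_derive_Reals. intros eps Heps.
  assert (Hd : 0 < Rmin 1 (eps / (M + 1))) by (apply Rmin_pos; [lra | apply Rdiv_lt_0_compat; lra]).
  exists (mkposreal _ Hd). intros h Hh0 Hh. simpl in Hh.
  pose proof (Rmin_l 1 (eps / (M + 1))). pose proof (Rmin_r 1 (eps / (M + 1))).
  specialize (Hrem h ltac:(lra)).
  assert (Hh1 : 0 < Rabs h) by (apply Rabs_pos_lt; exact Hh0).
  replace ((F (s + h) - F s) / h - L) with ((F (s + h) - F s - h * L) / h) by (field; exact Hh0).
  unfold Rdiv. rewrite Rabs_mult, Rabs_inv.
  apply Rle_lt_trans with (M * Rabs h).
  - apply (Rmult_le_reg_r (Rabs h)); [exact Hh1|].
    rewrite Rmult_assoc, Rinv_l, Rmult_1_r by lra.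
    rewrite <- (pow2_abs h) in Hrem. nra.
  - apply Rle_lt_trans with (M * (eps / (M + 1))); [apply Rmult_le_compat_l; lra|].
    unfold Rdiv. rewrite <- Rmult_assoc. apply (Rmult_lt_reg_r (M + 1)); [lra|].
    rewrite Rmult_assoc, Rinv_l by lra. nra.
Qed.

Section ParamDerive.

Variables (g g1 g2 : R -> R -> R) (s0 M : R).
Hypothesis g_derive : forall s r, is_derive (fun s => g s r) s (g1 s r).
Hypothesis g1_derive : forall s r, is_derive (fun s => g1 s r) s (g2 s r).
Hypothesis g_cont : forall s r, continuous (g s) r.
Hypothesis g1_cont : forall s r, continuous (g1 s) r.
Hypothesis g_dom : forall s r, Rabs (s - s0) <= 1 -> 0 <= r ->
  Rabs (g s r) <= M * exp (- r) /\ Rabs (g1 s r) <= M * exp (- r) /\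
  Rabs (g2 s r) <= M * exp (- r).

Lemma RInt_gen_param_remainder_le h : Rabs h <= 1 ->
  Rabs (RInt_gen (g (s0 + h)) at_0 at_oo - RInt_gen (g s0) at_0 at_oo
        - h * RInt_gen (g1 s0) at_0 at_oo) <= M * h ^ 2.
Proof.
  intros Hh.
  assert (Hex : forall k s, (k = g \/ k = g1) -> Rabs (s - s0) <= 1 ->
            is_RInt_gen (k s) at_0 at_oo (RInt_gen (k s) at_0 at_oo)).
  { intros k s Hk Hs. apply (RInt_gen_correct (V := R_CompleteNormedModule)).
    destruct Hk as [-> | ->];
      [apply (ex_RInt_gen_dominated _ M) | apply (ex_RInt_gen_dominated _ M)];
      try apply g_cont; try apply g1_cont; intros r Hr; apply (g_dom s r Hs Hr). }
  assert (H0 : Rabs (s0 - s0) <= 1) by (rewrite Rminus_diag, Rabs_R0; lra).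
  assert (Hh' : Rabs (s0 + h - s0) <= 1) by (replace (s0 + h - s0) with h by ring; exact Hh).
  set (D := fun r => g (s0 + h) r - g s0 r - h * g1 s0 r).
  assert (HD : is_RInt_gen D at_0 at_oo (RInt_gen (g (s0 + h)) at_0 at_oo
            - RInt_gen (g s0) at_0 at_oo - h * RInt_gen (g1 s0) at_0 at_oo)).
  { apply (is_RInt_gen_minus (V := R_NormedModule));
      [apply (is_RInt_gen_minus (V := R_NormedModule)) |
       apply (is_RInt_gen_scal (V := R_NormedModule))]; apply Hex; auto. }
  rewrite <- (is_RInt_gen_unique _ _ HD).
  apply (RInt_gen_dominated_le D (M * h ^ 2)).
  - intros r Hr. unfold D.
    replace (M * h ^ 2 * exp (- r)) with ((M * exp (- r)) * h ^ 2) by ring.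
    apply (taylor2_abs_le (fun s => g s r) (fun s => g1 s r) (fun s => g2 s r));
      [exact (fun t => g_derive t r) | exact (fun t => g1_derive t r) |].
    intros t Ht. apply (g_dom t r); [|exact Hr].
    revert Ht. unfold Rmin, Rmax. destruct (Rle_dec s0 (s0 + h)); revert Hh; unfold Rabs;
      repeat destruct Rcase_abs; lra.
  - intro r. unfold D.
    apply (continuous_minus (V := R_NormedModule));
      [apply (continuous_minus (V := R_NormedModule)); apply g_cont|].
    apply (continuous_scal (V := R_NormedModule) (fun _ => h) (g1 s0));
      [apply continuous_const | apply g1_cont].
Qed.

Lemma is_derive_RInt_gen_param :
  is_derive (fun s => RInt_gen (g s) at_0 at_oo) s0 (RInt_gen (g1 s0) at_0 at_oo).
Proof. apply (is_derive_quadratic_remainder _ _ _ M), RInt_gen_param_remainder_le. Qed.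

End ParamDerive.

Lemma pow_1_plus_le_exp k r : 0 <= r -> (1 + r) ^ k <= exp (INR k * r).
Proof.
  intro Hr. induction k as [|k IH].
  - simpl. rewrite Rmult_0_l, exp_0. lra.
  - rewrite S_INR, Rmult_plus_distr_r, Rmult_1_l, exp_plus. simpl. rewrite Rmult_comm.
    apply Rmult_le_compat; [apply pow_le; lra | lra | exact IH | apply exp_ineq1_le].
Qed.

Lemma neg_cubic_bounded_above e A B : 0 < e -> 0 <= A -> 0 <= B ->
  exists T, forall r, 0 <= r -> - e * r ^ 3 + A * r ^ 2 + B * r <= T.
Proof.
  intros He HA HB. set (r0 := (A + B + 1) / e + 1).
  assert (Hr0 : e * r0 = A + B + 1 + e) by (unfold r0; field; lra).
  assert (Hr01 : 1 <= r0) by nra.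
  exists (A * r0 ^ 2 + B * r0). intros r Hr.
  destruct (Rle_dec r r0) as [Hle|Hgt].
  - assert (r ^ 2 <= r0 ^ 2) by (apply pow_incr; lra).
    assert (0 <= e * r ^ 3) by (apply Rmult_le_pos; [lra | apply pow_le; lra]).
    assert (A * r ^ 2 <= A * r0 ^ 2) by (apply Rmult_le_compat_l; lra).
    assert (B * r <= B * r0) by (apply Rmult_le_compat_l; lra).
    lra.
  - assert (Hr1 : e * r >= A + B + 1) by nra.
    assert (0 <= A * r0 ^ 2 + B * r0)
      by (apply Rplus_le_le_0_compat; apply Rmult_le_pos; try apply pow_le; lra).
    assert (Hrr : r <= r * r) by nra.
    assert (B * r <= B * (r * r)) by (apply Rmult_le_compat_l; lra).
    assert (e * r ^ 3 >= (A + B + 1) * (r * r))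
      by (replace (e * r ^ 3) with ((e * r) * (r * r)) by ring;
          apply Rle_ge, Rmult_le_compat_r; nra).
    replace (r ^ 2) with (r * r) by ring. nra.
Qed.

Lemma exp_cubic_le_exp_opp A B : 0 <= A -> 0 <= B ->
  exists M, 0 < M /\ forall r, 0 <= r -> exp (- r ^ 3 / 3 + A * r ^ 2 + B * r) <= M * exp (- r).
Proof.
  intros HA HB. destruct (neg_cubic_bounded_above (1 / 3) A (B + 1)) as [T HT]; [lra | lra | lra |].
  exists (exp T). split; [apply exp_pos|]. intros r Hr.
  rewrite <- exp_plus. apply exp_le_compat. specialize (HT r Hr). lra.
Qed.

(** * The derivative of [Ai] and the Airy equation *)

Lemma sin_plus_PI3 x : sin (x + PI / 3) = sin x * (1 / 2) + cos x * (sqrt 3 / 2).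
Proof. rewrite sin_plus, sin_PI3, cos_PI3. ring. Qed.

Lemma Rabs_sin_le_1 x : Rabs (sin x) <= 1.
Proof. apply Rabs_le, SIN_bound. Qed.

(* Each derivative in [s] multiplies the integrand of [Ai] by [-r] and shifts its phase
   by [PI/3]. *)
Definition airy_integrand (k : nat) (s r : R) : R :=
  (- r) ^ k * exp (- r ^ 3 / 3 - s * r / 2) * sin ((INR k + 1) * (PI / 3) - sqrt 3 * s * r / 2).

Lemma airy_integrand_derive k s r :
  is_derive (fun s => airy_integrand k s r) s (airy_integrand (S k) s r).
Proof.
  unfold airy_integrand. auto_derive; [auto|]. rewrite S_INR.
  replace ((INR k + 1 + 1) * (PI / 3) - sqrt 3 * s * r / 2)
    with (((INR k + 1) * (PI / 3) - sqrt 3 * s * r / 2) + PI / 3) by ring.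
  rewrite sin_plus_PI3.
  replace ((INR k + 1) * (PI / 3) + - (sqrt 3 * s * r * / 2))
    with ((INR k + 1) * (PI / 3) - sqrt 3 * s * r / 2) by (unfold Rdiv; ring).
  replace (- (r * (r * (r * 1))) / 3 + - (s * r * / 2)) with (- r ^ 3 / 3 - s * r / 2)
    by (unfold Rdiv; ring).
  eq_in_R. change ((- r) ^ S k) with (- r * (- r) ^ k). set (t := (- r) ^ k). unfold Rdiv. ring.
Qed.

Lemma airy_integrand_cont k s r : continuous (airy_integrand k s) r.
Proof.
  apply (ex_derive_continuous (V := R_NormedModule)). unfold airy_integrand. auto_derive. auto.
Qed.

Lemma airy_integrand_dominated k s0 : exists M, 0 < M /\
  forall s r, Rabs (s - s0) <= 1 -> 0 <= r -> Rabs (airy_integrand k s r) <= M * exp (- r).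
Proof.
  set (B := INR k + (Rabs s0 + 1) / 2).
  assert (HB : 0 <= B) by (unfold B; pose proof (pos_INR k); pose proof (Rabs_pos s0); lra).
  destruct (exp_cubic_le_exp_opp 0 B (Rle_refl 0) HB) as [M [HM Hexp]].
  exists M. split; [exact HM|]. intros s r Hs Hr.
  eapply Rle_trans; [|apply (Hexp r Hr)].
  unfold airy_integrand. rewrite !Rabs_mult, (Rabs_right (exp _)) by (left; apply exp_pos).
  assert (Hpow : Rabs ((- r) ^ k) <= exp (INR k * r)).
  { rewrite <- RPow_abs, Rabs_Ropp, Rabs_right by lra.
    eapply Rle_trans; [apply pow_incr | apply (pow_1_plus_le_exp k r Hr)]. lra. }
  assert (Hsr : - s * r <= (Rabs s0 + 1) * r).
  { apply Rmult_le_compat_r; [exact Hr|]. revert Hs. unfold Rabs; repeat destruct Rcase_abs; lra. }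
  pose proof (Rabs_sin_le_1 ((INR k + 1) * (PI / 3) - sqrt 3 * s * r / 2)).
  pose proof (Rabs_pos (sin ((INR k + 1) * (PI / 3) - sqrt 3 * s * r / 2))).
  pose proof (Rabs_pos ((- r) ^ k)). pose proof (exp_pos (- r ^ 3 / 3 - s * r / 2)).
  apply Rle_trans with (exp (INR k * r) * exp (- r ^ 3 / 3 - s * r / 2)).
  { set (X := Rabs ((- r) ^ k) * exp (- r ^ 3 / 3 - s * r / 2)).
    assert (0 <= X) by (unfold X; nra).
    assert (X <= exp (INR k * r) * exp (- r ^ 3 / 3 - s * r / 2))
      by (unfold X; apply Rmult_le_compat_r; lra).
    nra. }
  rewrite <- exp_plus. apply exp_le_compat. unfold B. lra.
Qed.

Lemma ex_RInt_airy_integrand k s : ex_RInt_gen (airy_integrand k s) at_0 at_oo.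
Proof.
  destruct (airy_integrand_dominated k s) as [M [_ HM]].
  apply (ex_RInt_gen_dominated _ M); [|apply airy_integrand_cont].
  intros r Hr. apply HM; [rewrite Rminus_diag, Rabs_R0; lra | exact Hr].
Qed.

Lemma is_derive_RInt_airy_integrand k s :
  is_derive (fun s => RInt_gen (airy_integrand k s) at_0 at_oo) s
    (RInt_gen (airy_integrand (S k) s) at_0 at_oo).
Proof.
  destruct (airy_integrand_dominated k s) as [M0 [HM0 H0]].
  destruct (airy_integrand_dominated (S k) s) as [M1 [HM1 H1]].
  destruct (airy_integrand_dominated (S (S k)) s) as [M2 [HM2 H2]].
  apply (is_derive_RInt_gen_param _ _ (airy_integrand (S (S k))) s (M0 + M1 + M2));
    intros; try apply airy_integrand_derive; try apply airy_integrand_cont.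
  match goal with Hs : Rabs (_ - s) <= 1, Hr : 0 <= ?r |- _ =>
    specialize (H0 _ _ Hs Hr); specialize (H1 _ _ Hs Hr); specialize (H2 _ _ Hs Hr);
    pose proof (exp_pos (- r)) end.
  repeat split; nra.
Qed.

Lemma Ai_RInt s : Ai s = / PI * RInt_gen (airy_integrand 0 s) at_0 at_oo.
Proof.
  unfold Ai. do 2 f_equal. apply functional_extensionality. intro r.
  unfold airy_integrand. simpl. replace ((0 + 1) * (PI / 3)) with (PI / 3) by ring. ring.
Qed.

Definition Ai' (s : R) : R := / PI * RInt_gen (airy_integrand 1 s) at_0 at_oo.

Lemma is_derive_Ai s : is_derive Ai s (Ai' s).
Proof.
  apply is_derive_ext with (fun s => / PI * RInt_gen (airy_integrand 0 s) at_0 at_oo).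
  { intro t. symmetry. apply Ai_RInt. }
  apply is_derive_scal, is_derive_RInt_airy_integrand.
Qed.

Lemma airy_integrand_2_sub_derive s r :
  is_derive (fun r => exp (- r ^ 3 / 3 - s * r / 2) * sin (- (sqrt 3 * s * r / 2))) r
    (airy_integrand 2 s r - s * airy_integrand 0 s r).
Proof.
  unfold airy_integrand. auto_derive; [auto|]. simpl INR.
  replace ((1 + 1 + 1) * (PI / 3) - sqrt 3 * s * r / 2) with (PI - sqrt 3 * s * r / 2) by field.
  rewrite sin_PI_x.
  replace ((0 + 1) * (PI / 3) - sqrt 3 * s * r / 2) with (PI / 3 + - (sqrt 3 * s * r / 2)) by field.
  rewrite sin_plus, sin_PI3, cos_PI3, sin_neg, cos_neg.
  replace (- (sqrt 3 * s * r * / 2)) with (- (sqrt 3 * s * r / 2)) by (unfold Rdiv; ring).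
  rewrite sin_neg, cos_neg. unfold Rdiv.
  replace (exp (- (r * (r * (r * 1))) * / 3 + - (s * r * / 2)))
    with (exp (- r ^ 3 * / 3 - s * r * / 2)) by (f_equal; ring).
  eq_in_R. field.
Qed.

Lemma is_RInt_gen_airy_integrand_2_sub s :
  is_RInt_gen (fun r => airy_integrand 2 s r - s * airy_integrand 0 s r) at_0 at_oo 0.
Proof.
  destruct (exp_cubic_le_exp_opp 0 (Rabs s / 2)) as [M [_ HM]];
    [lra | pose proof (Rabs_pos s); lra |].
  set (F := fun r => exp (- r ^ 3 / 3 - s * r / 2) * sin (- (sqrt 3 * s * r / 2))).
  replace 0 with (- F 0) at 2
    by (unfold F; replace (- (sqrt 3 * s * 0 / 2)) with 0 by field; rewrite sin_0; ring).
  apply (is_RInt_gen_derive_dominated F _ M); [apply airy_integrand_2_sub_derive | |].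
  - intro r. apply (continuous_minus (V := R_NormedModule)); [apply airy_integrand_cont|].
    apply (continuous_scal (V := R_NormedModule) (fun _ => s));
      [apply continuous_const | apply airy_integrand_cont].
  - intros r Hr. unfold F. rewrite Rabs_mult, (Rabs_right (exp _)) by (left; apply exp_pos).
    eapply Rle_trans; [|apply (HM r Hr)].
    pose proof (Rabs_sin_le_1 (- (sqrt 3 * s * r / 2))).
    pose proof (Rabs_pos (sin (- (sqrt 3 * s * r / 2)))).
    pose proof (exp_pos (- r ^ 3 / 3 - s * r / 2)).
    apply Rle_trans with (exp (- r ^ 3 / 3 - s * r / 2)); [nra|].
    apply exp_le_compat.
    assert (- s * r <= Rabs s * r) by (apply Rmult_le_compat_r; [lra | apply Rabs_maj2]).
    lra.
Qed.

Lemma RInt_airy_integrand_2 s :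
  RInt_gen (airy_integrand 2 s) at_0 at_oo = s * RInt_gen (airy_integrand 0 s) at_0 at_oo.
Proof.
  assert (Hlin : is_RInt_gen (fun r => airy_integrand 2 s r - s * airy_integrand 0 s r) at_0 at_oo
    (RInt_gen (airy_integrand 2 s) at_0 at_oo - s * RInt_gen (airy_integrand 0 s) at_0 at_oo)).
  { apply (is_RInt_gen_minus (V := R_NormedModule));
      [|apply (is_RInt_gen_scal (V := R_NormedModule))];
      apply (RInt_gen_correct (V := R_CompleteNormedModule)), ex_RInt_airy_integrand. }
  pose proof (is_RInt_gen_airy_integrand_2_sub s) as Hzero.
  apply (is_RInt_gen_unique (V := R_CompleteNormedModule)) in Hzero, Hlin.
  rewrite Hzero in Hlin. lra.
Qed.

Lemma is_derive_Ai' s : is_derive Ai' s (s * Ai s).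
Proof.
  rewrite Ai_RInt, <- Rmult_assoc, (Rmult_comm s), Rmult_assoc, <- RInt_airy_integrand_2.
  apply is_derive_scal, is_derive_RInt_airy_integrand.
Qed.

(** * Contour shift and the decay of [Ai] and [Ai'] *)

Lemma is_derive_exp_mul_sin_cos (A B P Q : R -> R) x dA dB dP dQ :
  is_derive A x dA -> is_derive B x dB -> is_derive P x dP -> is_derive Q x dQ ->
  is_derive (fun x => exp (A x) * (P x * sin (B x) + Q x * cos (B x))) x
    (exp (A x) * ((dA * P x + dP - Q x * dB) * sin (B x) + (dA * Q x + dQ + P x * dB) * cos (B x))).
Proof.
  intros HA HB HP HQ. auto_derive.
  - repeat split; eexists; eauto.
  - change (fun y => A y) with A. change (fun y => B y) with B.
    change (fun y => P y) with P. change (fun y => Q y) with Q.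
    rewrite (is_derive_unique _ _ _ HA), (is_derive_unique _ _ _ HB),
      (is_derive_unique _ _ _ HP), (is_derive_unique _ _ _ HQ).
    ring.
Qed.

Lemma Rabs_exp_mul_sin_cos_le E u v t : 0 <= E ->
  Rabs (E * (u * sin t + v * cos t)) <= E * (Rabs u + Rabs v).
Proof.
  intro HE. rewrite Rabs_mult, (Rabs_right E) by lra. apply Rmult_le_compat_l; [exact HE|].
  eapply Rle_trans; [apply Rabs_triang|]. rewrite !Rabs_mult.
  pose proof (Rabs_pos u). pose proof (Rabs_pos v).
  pose proof (Rabs_sin_le_1 t). assert (Rabs (cos t) <= 1) by apply Rabs_le, COS_bound.
  pose proof (Rabs_pos (sin t)). pose proof (Rabs_pos (cos t)). nra.
Qed.

(* Real and imaginary parts of [ζ^3/3 - s ζ] on the ray [ζ = c + r e^{i PI/3}], [r >= 0].  The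
   contour integral defining [Ai s] may be taken along this ray for any real [c], where it becomes
   the integral over [r] of [ray_integrand s c]; [c = sqrt s] is the saddle point. *)
Definition ray_re (s c r : R) : R :=
  c ^ 3 / 3 - s * c + (c ^ 2 - s) * r / 2 - c * r ^ 2 / 2 - r ^ 3 / 3.
Definition ray_im (s c r : R) : R := sqrt 3 / 2 * ((c ^ 2 - s) * r + c * r ^ 2).
Definition ray_re_dc (s c r : R) : R := c ^ 2 - s + c * r - r ^ 2 / 2.
Definition ray_im_dc (c r : R) : R := sqrt 3 * (c * r + r ^ 2 / 2).

Definition ray_integrand (s c r : R) : R := exp (ray_re s c r) * sin (PI / 3 + ray_im s c r).
Definition ray_integrand_dc (s c r : R) : R :=
  exp (ray_re s c r) *
    (ray_re_dc s c r * sin (PI / 3 + ray_im s c r) + ray_im_dc c r * cos (PI / 3 + ray_im s c r)).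
Definition ray_integrand_dc2 (s c r : R) : R :=
  exp (ray_re s c r) *
    ((2 * c + r + ray_re_dc s c r ^ 2 - ray_im_dc c r ^ 2) * sin (PI / 3 + ray_im s c r)
     + (sqrt 3 * r + 2 * ray_re_dc s c r * ray_im_dc c r) * cos (PI / 3 + ray_im s c r)).
(* By the Cauchy-Riemann equations its [r]-derivative is [ray_integrand_dc], so the latter
   integrates to [0] and the integral of [ray_integrand s c] does not depend on [c]. *)
Definition ray_primitive (s c r : R) : R := exp (ray_re s c r) * sin (ray_im s c r).

Lemma ray_integrand_derive s c r :
  is_derive (fun c => ray_integrand s c r) c (ray_integrand_dc s c r).
Proof.
  apply (is_derive_ext (fun c => exp (ray_re s c r) *
    (1 * sin (PI / 3 + ray_im s c r) + 0 * cos (PI / 3 + ray_im s c r)))).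
  { intro t. unfold ray_integrand. eq_in_R. ring. }
  eapply is_derive_eq.
  - apply (is_derive_exp_mul_sin_cos (fun c => ray_re s c r) (fun c => PI / 3 + ray_im s c r)
      (fun _ => 1) (fun _ => 0) c (ray_re_dc s c r) (ray_im_dc c r) 0 0);
      try (unfold ray_re, ray_im, ray_re_dc, ray_im_dc; auto_derive; auto; eq_in_R; field).
  - unfold ray_integrand_dc. eq_in_R. ring.
Qed.

Lemma ray_integrand_dc_derive s c r :
  is_derive (fun c => ray_integrand_dc s c r) c (ray_integrand_dc2 s c r).
Proof.
  eapply is_derive_eq.
  - apply (is_derive_exp_mul_sin_cos (fun c => ray_re s c r) (fun c => PI / 3 + ray_im s c r)
      (fun c => ray_re_dc s c r) (fun c => ray_im_dc c r) c (ray_re_dc s c r) (ray_im_dc c r)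
      (2 * c + r) (sqrt 3 * r));
      unfold ray_re, ray_im, ray_re_dc, ray_im_dc; auto_derive; auto; eq_in_R; field.
  - unfold ray_integrand_dc2. eq_in_R. ring.
Qed.

Lemma ray_primitive_derive s c r : is_derive (ray_primitive s c) r (ray_integrand_dc s c r).
Proof.
  apply (is_derive_ext (fun r => exp (ray_re s c r) *
    (1 * sin (ray_im s c r) + 0 * cos (ray_im s c r)))).
  { intro t. unfold ray_primitive. eq_in_R. ring. }
  eapply is_derive_eq.
  - apply (is_derive_exp_mul_sin_cos (fun r => ray_re s c r) (fun r => ray_im s c r)
      (fun _ => 1) (fun _ => 0) r ((c ^ 2 - s) / 2 - c * r - r ^ 2)
      (sqrt 3 / 2 * (c ^ 2 - s + 2 * c * r)) 0 0);
      try (unfold ray_re, ray_im; auto_derive; auto; eq_in_R; field).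
  - eq_in_R. unfold ray_integrand_dc, ray_re_dc, ray_im_dc.
    rewrite sin_plus, cos_plus, sin_PI3, cos_PI3.
    assert (H3 : sqrt 3 * sqrt 3 = 3) by (apply sqrt_sqrt; lra).
    set (q := sqrt 3) in *. set (E := exp _). set (S := sin _). set (C := cos _).
    replace (q * (c * r + r ^ 2 / 2) * (1 / 2 * C - q / 2 * S))
      with (q * (c * r + r ^ 2 / 2) * (1 / 2) * C - (q * q) * (c * r + r ^ 2 / 2) / 2 * S) by field.
    rewrite H3. field.
Qed.

Definition ray_majorant (s c0 r : R) : R :=
  ((Rabs c0 + 1) ^ 2 + Rabs s + 2 * (Rabs c0 + 1) + 2) * (1 + r) ^ 2.

Lemma ray_coeffs_le s c0 c r : Rabs (c - c0) <= 1 -> 0 <= r ->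
  let X := ray_majorant s c0 r in
  1 <= X /\ Rabs (ray_re_dc s c r) <= X /\ Rabs (ray_im_dc c r) <= X /\
  Rabs (2 * c + r) <= X /\ Rabs (sqrt 3 * r) <= X.
Proof.
  intros Hc Hr X. unfold X, ray_majorant, ray_re_dc, ray_im_dc.
  set (C := Rabs c0 + 1). set (P := C ^ 2 + Rabs s + 2 * C + 2).
  assert (HC : 1 <= C) by (unfold C; pose proof (Rabs_pos c0); lra).
  pose proof (Rabs_pos s) as Hs0. pose proof (Rabs_maj2 s). pose proof (Rle_abs s).
  assert (HP : 1 <= P) by (unfold P; nra).
  assert (Hc1 : - C <= c <= C).
  { unfold C. revert Hc. unfold Rabs; repeat destruct Rcase_abs; lra. }
  assert (Hq : 0 <= sqrt 3 <= 2).
  { split; [apply sqrt_pos|]. rewrite <- (sqrt_square 2) by lra. apply sqrt_le_1_alt. lra. }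
  assert (HXe : P * (1 + r) ^ 2 = P + 2 * (P * r) + P * r ^ 2) by ring.
  assert (Hr2 : 0 <= r ^ 2) by nra.
  assert (HPr : C * r <= P * r) by (apply Rmult_le_compat_r; unfold P; nra).
  assert (HPr2 : r ^ 2 <= P * r ^ 2) by nra.
  assert (Hcr : - (C * r) <= c * r <= C * r) by (split; nra).
  assert (Hc2 : c ^ 2 <= C ^ 2) by nra.
  repeat split.
  - nra.
  - apply Rabs_le. unfold P. split; nra.
  - rewrite Rabs_mult, Rabs_right by lra.
    assert (Rabs (c * r + r ^ 2 / 2) <= C * r + r ^ 2) by (apply Rabs_le; split; nra).
    pose proof (Rabs_pos (c * r + r ^ 2 / 2)).
    apply Rle_trans with (2 * (C * r + r ^ 2)); [nra | unfold P; nra].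
  - apply Rabs_le. unfold P. split; nra.
  - rewrite Rabs_mult, (Rabs_right (sqrt 3)), (Rabs_right r) by lra. nra.
Qed.

Lemma exp_ray_re_le s c0 c r : Rabs (c - c0) <= 1 -> 0 <= r ->
  let C := Rabs c0 + 1 in
  exp (ray_re s c r) <=
    exp (C ^ 3 / 3 + Rabs s * C) * exp (- r ^ 3 / 3 + C / 2 * r ^ 2 + (C ^ 2 + Rabs s) / 2 * r).
Proof.
  intros Hc Hr C. rewrite <- exp_plus. apply exp_le_compat. unfold ray_re.
  assert (HC : 1 <= C) by (unfold C; pose proof (Rabs_pos c0); lra).
  pose proof (Rabs_pos s). pose proof (Rabs_maj2 s). pose proof (Rle_abs s).
  assert (Hc1 : - C <= c <= C).
  { unfold C. revert Hc. unfold Rabs; repeat destruct Rcase_abs; lra. }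
  assert (c ^ 3 <= C ^ 3).
  { apply Rle_trans with (Rabs c ^ 3).
    - rewrite RPow_abs. apply Rle_abs.
    - apply pow_incr. split; [apply Rabs_pos | apply Rabs_le; lra]. }
  assert (- s * c <= Rabs s * C) by nra.
  assert (c ^ 2 <= C ^ 2) by nra.
  assert (c ^ 2 * r <= C ^ 2 * r) by (apply Rmult_le_compat_r; lra).
  assert (0 <= r ^ 2) by nra.
  assert (- s * r <= Rabs s * r) by nra.
  assert (- c * r ^ 2 <= C * r ^ 2) by nra.
  lra.
Qed.

Lemma ray_terms_le s c0 c r : Rabs (c - c0) <= 1 -> 0 <= r ->
  let Y := 6 * ray_majorant s c0 r ^ 2 * exp (ray_re s c r) in
  Rabs (ray_integrand s c r) <= Y /\ Rabs (ray_integrand_dc s c r) <= Y /\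
  Rabs (ray_integrand_dc2 s c r) <= Y /\ Rabs (ray_primitive s c r) <= Y.
Proof.
  intros Hc Hr Y. unfold Y.
  destruct (ray_coeffs_le s c0 c r Hc Hr) as [HX [F1 [F2 [F3 F4]]]].
  set (X := ray_majorant s c0 r) in *.
  pose proof (exp_pos (ray_re s c r)) as He.
  assert (HX2 : X <= X ^ 2) by nra.
  assert (Hsin : forall t, Rabs (exp (ray_re s c r) * sin t) <= 6 * X ^ 2 * exp (ray_re s c r)).
  { intro t. rewrite Rabs_mult, Rabs_right by lra.
    pose proof (Rabs_sin_le_1 t). pose proof (Rabs_pos (sin t)). nra. }
  repeat split; [apply Hsin | | | apply Hsin].
  - unfold ray_integrand_dc. eapply Rle_trans; [apply Rabs_exp_mul_sin_cos_le; lra | nra].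
  - unfold ray_integrand_dc2. eapply Rle_trans; [apply Rabs_exp_mul_sin_cos_le; lra|].
    pose proof (Rabs_pos (ray_re_dc s c r)). pose proof (Rabs_pos (ray_im_dc c r)).
    assert (Rabs (2 * c + r + ray_re_dc s c r ^ 2 - ray_im_dc c r ^ 2) <= X + 2 * X ^ 2).
    { unfold Rminus. eapply Rle_trans; [apply Rabs_triang|]. rewrite Rabs_Ropp.
      eapply Rle_trans; [apply Rplus_le_compat_r, Rabs_triang|].
      rewrite <- !RPow_abs.
      assert (Rabs (ray_re_dc s c r) ^ 2 <= X ^ 2) by (apply pow_incr; lra).
      assert (Rabs (ray_im_dc c r) ^ 2 <= X ^ 2) by (apply pow_incr; lra). lra. }
    assert (Rabs (sqrt 3 * r + 2 * ray_re_dc s c r * ray_im_dc c r) <= X + 2 * X ^ 2).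
    { eapply Rle_trans; [apply Rabs_triang|].
      assert (Rabs (2 * ray_re_dc s c r * ray_im_dc c r) <= 2 * X ^ 2).
      { rewrite !Rabs_mult, (Rabs_right 2) by lra.
        assert (Rabs (ray_re_dc s c r) * Rabs (ray_im_dc c r) <= X * X)
          by (apply Rmult_le_compat; lra).
        nra. }
      lra. }
    rewrite (Rmult_comm (6 * X ^ 2)). apply Rmult_le_compat_l; lra.
Qed.

Lemma ray_dominated s c0 : exists M, 0 < M /\ forall c r, Rabs (c - c0) <= 1 -> 0 <= r ->
  Rabs (ray_integrand s c r) <= M * exp (- r) /\ Rabs (ray_integrand_dc s c r) <= M * exp (- r) /\
  Rabs (ray_integrand_dc2 s c r) <= M * exp (- r) /\ Rabs (ray_primitive s c r) <= M * exp (- r).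
Proof.
  set (C := Rabs c0 + 1). set (K := C ^ 2 + Rabs s + 2 * C + 2).
  assert (HC : 1 <= C) by (unfold C; pose proof (Rabs_pos c0); lra).
  pose proof (Rabs_pos s).
  destruct (exp_cubic_le_exp_opp (C / 2) ((C ^ 2 + Rabs s) / 2 + INR 4)) as [M0 [HM0 Hcub]];
    [lra | simpl; nra |].
  set (D := exp (C ^ 3 / 3 + Rabs s * C)).
  assert (HK : 0 < K) by (unfold K; nra).
  assert (HD : 0 < D) by apply exp_pos.
  exists (6 * K ^ 2 * D * M0). split; [repeat apply Rmult_lt_0_compat; try apply pow_lt; lra|].
  intros c r Hc Hr.
  assert (Hfin : forall Y, Y <= 6 * ray_majorant s c0 r ^ 2 * exp (ray_re s c r) ->
            Y <= 6 * K ^ 2 * D * M0 * exp (- r)).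
  { intros Y HY. eapply Rle_trans; [exact HY|].
    replace (6 * ray_majorant s c0 r ^ 2) with (6 * K ^ 2 * (1 + r) ^ 4)
      by (unfold ray_majorant, K, C; ring).
    replace (6 * K ^ 2 * D * M0 * exp (- r)) with (6 * K ^ 2 * (D * (M0 * exp (- r)))) by ring.
    rewrite Rmult_assoc. apply Rmult_le_compat_l; [nra|].
    set (cub := - r ^ 3 / 3 + C / 2 * r ^ 2 + (C ^ 2 + Rabs s) / 2 * r).
    apply Rle_trans with (exp (INR 4 * r) * (D * exp cub)).
    { apply Rmult_le_compat; [apply pow_le; lra | left; apply exp_pos |
        apply (pow_1_plus_le_exp 4 r Hr) | apply (exp_ray_re_le s c0 c r Hc Hr)]. }
    replace (exp (INR 4 * r) * (D * exp cub)) with (D * exp (cub + INR 4 * r))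
      by (rewrite exp_plus; ring).
    apply Rmult_le_compat_l; [lra|].
    eapply Rle_trans; [|apply (Hcub r Hr)]. apply exp_le_compat. unfold cub. lra. }
  destruct (ray_terms_le s c0 c r Hc Hr) as [H1 [H2 [H3 H4]]].
  repeat split; apply Hfin; assumption.
Qed.

Lemma ray_integrand_cont s c r : continuous (ray_integrand s c) r.
Proof.
  apply (ex_derive_continuous (V := R_NormedModule)).
  unfold ray_integrand, ray_re, ray_im. auto_derive. auto.
Qed.

Lemma ray_integrand_dc_cont s c r : continuous (ray_integrand_dc s c) r.
Proof.
  apply (ex_derive_continuous (V := R_NormedModule)).
  unfold ray_integrand_dc, ray_re, ray_im, ray_re_dc, ray_im_dc. auto_derive. auto.
Qed.

Lemma RInt_ray_integrand_dc s c : RInt_gen (ray_integrand_dc s c) at_0 at_oo = 0.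
Proof.
  destruct (ray_dominated s c) as [M [_ HM]].
  apply (is_RInt_gen_unique (V := R_CompleteNormedModule)).
  replace 0 with (- ray_primitive s c 0) at 2.
  - apply (is_RInt_gen_derive_dominated (ray_primitive s c) _ M);
      [apply ray_primitive_derive | apply ray_integrand_dc_cont|].
    intros r Hr. apply (HM c r); [rewrite Rminus_diag, Rabs_R0; lra | exact Hr].
  - unfold ray_primitive, ray_im.
    replace (sqrt 3 / 2 * ((c ^ 2 - s) * 0 + c * 0 ^ 2)) with 0 by ring. rewrite sin_0. ring.
Qed.

Lemma RInt_ray_integrand_indep s c :
  RInt_gen (ray_integrand s c) at_0 at_oo = RInt_gen (ray_integrand s 0) at_0 at_oo.
Proof.
  set (J := fun c => RInt_gen (ray_integrand s c) at_0 at_oo). change (J c = J 0).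
  assert (HJ : forall c0, is_derive J c0 0).
  { intro c0. apply is_derive_eq with (RInt_gen (ray_integrand_dc s c0) at_0 at_oo);
      [|apply RInt_ray_integrand_dc].
    destruct (ray_dominated s c0) as [M [_ HM]].
    apply (is_derive_RInt_gen_param (ray_integrand s) (ray_integrand_dc s) (ray_integrand_dc2 s)
             c0 M);
      intros; try apply ray_integrand_derive; try apply ray_integrand_dc_derive;
      try apply ray_integrand_cont; try apply ray_integrand_dc_cont.
    match goal with Hs : Rabs (_ - c0) <= 1, Hr : 0 <= _ |- _ =>
      destruct (HM _ _ Hs Hr) as [? [? [? _]]] end.
    auto. }
  assert (Hz : Rabs (J c - J 0) <= 0).
  { eapply Rle_trans; [apply (mvt_abs_le J (fun _ => 0) 0 c 0 HJ) | lra].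
    intros; rewrite Rabs_R0; lra. }
  pose proof (Rabs_pos (J c - J 0)).
  apply Rminus_diag_uniq, Rabs_eq_0. lra.
Qed.

Lemma Ai_RInt_ray s c : Ai s = / PI * RInt_gen (ray_integrand s c) at_0 at_oo.
Proof.
  rewrite RInt_ray_integrand_indep, Ai_RInt. do 2 f_equal.
  apply functional_extensionality. intro r. unfold ray_integrand, airy_integrand, ray_re, ray_im.
  simpl. rewrite Rmult_1_l. f_equal; f_equal; field.
Qed.

Definition airy_decay (s : R) : R := exp (- (2 / 3) * sqrt s ^ 3).

Lemma airy_decay_pos s : 0 < airy_decay s.
Proof. apply exp_pos. Qed.

Lemma airy_decay_antimono s t : s <= t -> airy_decay t <= airy_decay s.
Proof.
  intro Hst. unfold airy_decay. apply exp_le_compat.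
  assert (sqrt s ^ 3 <= sqrt t ^ 3)
    by (apply pow_incr; split; [apply sqrt_pos | apply sqrt_le_1_alt; exact Hst]).
  lra.
Qed.

(* For [s < 0] we have [sqrt s = 0] in Rocq, so the ray starts at the origin. *)
Lemma ray_re_sqrt_le s L r : 0 <= L -> 0 <= r -> - L <= s ->
  ray_re s (sqrt s) r <= - (2 / 3) * sqrt s ^ 3 + (- r ^ 3 / 3 + 0 * r ^ 2 + L / 2 * r).
Proof.
  intros HL Hr Hs. unfold ray_re.
  destruct (Rle_dec 0 s) as [Hs0|Hs0].
  - set (c := sqrt s). assert (Hc : 0 <= c) by apply sqrt_pos.
    assert (Hcs : c * c = s) by (apply sqrt_sqrt; exact Hs0).
    assert (0 <= c * r ^ 2) by (apply Rmult_le_pos; [exact Hc | nra]).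
    assert (0 <= L * r) by nra.
    rewrite <- Hcs. simpl. nra.
  - rewrite sqrt_neg_0 by lra. simpl. nra.
Qed.

Lemma Ai_le_airy_decay L : 0 <= L -> exists C, 0 < C /\ forall s, - L <= s ->
  Rabs (Ai s) <= C * airy_decay s.
Proof.
  intro HL.
  destruct (exp_cubic_le_exp_opp 0 (L / 2)) as [M [HM Hcub]]; [lra | lra |].
  pose proof PI_RGT_0.
  exists (/ PI * M). split; [apply Rmult_lt_0_compat; [apply Rinv_0_lt_compat|]; lra|].
  intros s Hs. rewrite (Ai_RInt_ray s (sqrt s)), Rabs_mult, Rabs_right
    by (left; apply Rinv_0_lt_compat; lra).
  rewrite Rmult_assoc. apply Rmult_le_compat_l; [left; apply Rinv_0_lt_compat; lra|].
  apply (RInt_gen_dominated_le _ (M * airy_decay s)); [|apply ray_integrand_cont].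
  intros r Hr. unfold ray_integrand.
  rewrite Rabs_mult, (Rabs_right (exp _)) by (left; apply exp_pos).
  pose proof (Rabs_sin_le_1 (PI / 3 + ray_im s (sqrt s) r)).
  pose proof (Rabs_pos (sin (PI / 3 + ray_im s (sqrt s) r))).
  pose proof (exp_pos (ray_re s (sqrt s) r)).
  apply Rle_trans with (exp (ray_re s (sqrt s) r)); [nra|].
  eapply Rle_trans; [apply exp_le_compat, (ray_re_sqrt_le s L r HL Hr Hs)|].
  rewrite exp_plus. unfold airy_decay. rewrite (Rmult_comm M), Rmult_assoc.
  apply Rmult_le_compat_l; [left; apply exp_pos | apply (Hcub r Hr)].
Qed.

Lemma Ai'_le_airy_decay L : 0 <= L -> exists C, 0 < C /\ forall s, - L <= s ->
  Rabs (Ai' s) <= C * (2 + Rabs s) * airy_decay s.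
Proof.
  intro HL. destruct (Ai_le_airy_decay L HL) as [CA [HCA HA]].
  exists (2 * CA). split; [lra|]. intros s Hs.
  pose proof (airy_decay_pos s) as HE. pose proof (Rabs_pos s). set (E := airy_decay s) in *.
  assert (HCAE : 0 <= CA * E) by nra.
  assert (Htaylor : Rabs (Ai (s + 1) - Ai s - 1 * Ai' s) <= (Rabs s + 1) * (CA * E) * 1 ^ 2).
  { apply (taylor2_abs_le Ai Ai' (fun t => t * Ai t)); [exact is_derive_Ai | exact is_derive_Ai'|].
    intros t Ht. rewrite Rmin_left, Rmax_right in Ht by lra.
    rewrite Rabs_mult. apply Rmult_le_compat; [apply Rabs_pos | apply Rabs_pos | |].
    - apply Rabs_le. pose proof (Rabs_maj2 s). pose proof (Rle_abs s). lra.
    - eapply Rle_trans; [apply HA; lra|].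
      apply Rmult_le_compat_l; [lra | apply airy_decay_antimono; lra]. }
  assert (H1 : Rabs (Ai (s + 1)) <= CA * E).
  { eapply Rle_trans; [apply HA; lra|].
    apply Rmult_le_compat_l; [lra | apply airy_decay_antimono; lra]. }
  assert (H0 : Rabs (Ai s) <= CA * E) by (apply HA; lra).
  replace (Ai' s) with (Ai (s + 1) - Ai s - (Ai (s + 1) - Ai s - 1 * Ai' s)) by ring.
  eapply Rle_trans; [apply Rabs_triang|]. rewrite Rabs_Ropp.
  eapply Rle_trans; [apply Rplus_le_compat_r, Rabs_triang|]. rewrite Rabs_Ropp.
  assert (0 <= Rabs s * (CA * E)) by nra.
  replace (2 * CA * (2 + Rabs s) * E) with (4 * (CA * E) + 2 * (Rabs s * (CA * E))) by ring.
  replace ((Rabs s + 1) * (CA * E) * 1 ^ 2) with (Rabs s * (CA * E) + CA * E) in Htaylor by ring.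
  lra.
Qed.

(** * Derivatives of the kernel *)

Inductive poly_xz : (R -> R -> R) -> Prop :=
  | poly_xz_const c : poly_xz (fun _ _ => c)
  | poly_xz_x : poly_xz (fun x _ => x)
  | poly_xz_z : poly_xz (fun _ z => z)
  | poly_xz_add p q : poly_xz p -> poly_xz q -> poly_xz (fun x z => p x z + q x z)
  | poly_xz_mul p q : poly_xz p -> poly_xz q -> poly_xz (fun x z => p x z * q x z).

Ltac poly_xz_auto :=
  repeat first [ assumption | apply poly_xz_x | apply poly_xz_z | apply poly_xz_add
               | apply poly_xz_mul | apply poly_xz_const ].

Lemma poly_xz_derive_x p : poly_xz p ->
  exists p', poly_xz p' /\ forall x z, is_derive (fun x => p x z) x (p' x z).
Proof.
  induction 1 as [c | | | p q _ [p' [Hp' Dp]] _ [q' [Hq' Dq]]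
                        | p q Hp [p' [Hp' Dp]] Hq [q' [Hq' Dq]]].
  - exists (fun _ _ => 0). split; [poly_xz_auto | intros; auto_derive; auto].
  - exists (fun _ _ => 1). split; [poly_xz_auto | intros; auto_derive; auto].
  - exists (fun _ _ => 0). split; [poly_xz_auto | intros; auto_derive; auto].
  - exists (fun x z => p' x z + q' x z). split; [poly_xz_auto|].
    intros x z. apply (is_derive_plus (fun x => p x z) (fun x => q x z)); auto.
  - exists (fun x z => p' x z * q x z + p x z * q' x z). split; [poly_xz_auto|].
    intros x z. eapply is_derive_eq.
    + apply (is_derive_mult (fun x => p x z) (fun x => q x z));
        [apply Dp | apply Dq | intros; apply Rmult_comm].
    + simpl. unfold plus, mult; simpl. ring.
Qed.

Lemma poly_xz_exp_bound p : poly_xz p -> exists C d, 0 <= C /\ 0 <= d /\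
  forall x z, Rabs (p x z) <= C * exp (d * (Rabs x + Rabs z)).
Proof.
  induction 1 as [c | | | p q _ [C1 [d1 [HC1 [Hd1 Hp]]]] _ [C2 [d2 [HC2 [Hd2 Hq]]]]
                        | p q _ [C1 [d1 [HC1 [Hd1 Hp]]]] _ [C2 [d2 [HC2 [Hd2 Hq]]]]].
  - exists (Rabs c), 0. split; [apply Rabs_pos|]. split; [lra|].
    intros. rewrite Rmult_0_l, exp_0. lra.
  - exists 1, 1. split; [lra|]. split; [lra|]. intros x z. rewrite !Rmult_1_l.
    pose proof (exp_ineq1_le (Rabs x + Rabs z)). pose proof (Rabs_pos z). lra.
  - exists 1, 1. split; [lra|]. split; [lra|]. intros x z. rewrite !Rmult_1_l.
    pose proof (exp_ineq1_le (Rabs x + Rabs z)). pose proof (Rabs_pos x). lra.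
  - exists (C1 + C2), (d1 + d2). split; [lra|]. split; [lra|]. intros x z.
    set (t := Rabs x + Rabs z).
    assert (Ht : 0 <= t) by (unfold t; pose proof (Rabs_pos x); pose proof (Rabs_pos z); lra).
    assert (exp (d1 * t) <= exp ((d1 + d2) * t)) by (apply exp_le_compat; nra).
    assert (exp (d2 * t) <= exp ((d1 + d2) * t)) by (apply exp_le_compat; nra).
    specialize (Hp x z). specialize (Hq x z). fold t in Hp, Hq.
    eapply Rle_trans; [apply Rabs_triang|]. nra.
  - exists (C1 * C2), (d1 + d2). split; [nra|]. split; [lra|]. intros x z.
    rewrite Rabs_mult, Rmult_plus_distr_r, exp_plus.
    replace (C1 * C2 * (exp (d1 * (Rabs x + Rabs z)) * exp (d2 * (Rabs x + Rabs z))))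
      with ((C1 * exp (d1 * (Rabs x + Rabs z))) * (C2 * exp (d2 * (Rabs x + Rabs z)))) by ring.
    apply Rmult_le_compat; [apply Rabs_pos | apply Rabs_pos | apply Hp | apply Hq].
Qed.

Lemma Derive_n_Kker a y n : exists P Q, poly_xz P /\ poly_xz Q /\ forall x z,
  Derive_n (fun x' => Kker a x' y z) n x =
    exp (2 * x * y * z) * (P x z * Ai (x ^ 2 + y ^ 2 + z ^ 2 + a / 4)
                           + Q x z * Ai' (x ^ 2 + y ^ 2 + z ^ 2 + a / 4)).
Proof.
  induction n as [|n [P [Q [HP [HQ Hrep]]]]].
  - exists (fun _ _ => 2), (fun _ _ => 0). split; [poly_xz_auto|]. split; [poly_xz_auto|].
    intros x z. unfold Kker. simpl. eq_in_R. ring.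
  - destruct (poly_xz_derive_x P HP) as [P' [HP' DP]].
    destruct (poly_xz_derive_x Q HQ) as [Q' [HQ' DQ]].
    exists (fun x z => P' x z + 2 * y * z * P x z
                       + 2 * x * (x ^ 2 + y ^ 2 + z ^ 2 + a / 4) * Q x z),
           (fun x z => Q' x z + 2 * y * z * Q x z + 2 * x * P x z).
    split; [poly_xz_auto|]. split; [poly_xz_auto|].
    intros x z. simpl Derive_n. rewrite (Derive_ext _ _ x (fun x => Hrep x z)).
    apply is_derive_unique.
    auto_derive.
    + repeat split; eexists; [apply DP | apply is_derive_Ai | apply DQ | apply is_derive_Ai'].
    + change (fun x0 => Ai x0) with Ai. change (fun x0 => Ai' x0) with Ai'.
      replace (Derive (fun x0 => P x0 z) x) with (P' x z) by (symmetry; apply is_derive_unique, DP).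
      replace (Derive (fun x0 => Q x0 z) x) with (Q' x z) by (symmetry; apply is_derive_unique, DQ).
      rewrite (is_derive_unique Ai _ _ (is_derive_Ai _)),
        (is_derive_unique Ai' _ _ (is_derive_Ai' _)).
      replace (x * (x * 1) + y * (y * 1) + z * (z * 1) + a / 4)
        with (x ^ 2 + y ^ 2 + z ^ 2 + a / 4) by ring.
      eq_in_R. ring.
Qed.

Lemma poly_xz_le_exp_norm p : poly_xz p -> exists C d, 0 <= C /\ 0 <= d /\
  forall x z, Rabs (p x z) <= C * exp (d * sqrt (x ^ 2 + z ^ 2)).
Proof.
  intros Hp. destruct (poly_xz_exp_bound p Hp) as [C [d [HC [Hd Hb]]]].
  exists C, (2 * d). split; [exact HC|]. split; [lra|]. intros x z.
  eapply Rle_trans; [apply Hb|]. apply Rmult_le_compat_l; [exact HC|]. apply exp_le_compat.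
  set (R0 := sqrt (x ^ 2 + z ^ 2)).
  assert (HR2 : R0 ^ 2 = x ^ 2 + z ^ 2) by (apply pow2_sqrt; nra).
  assert (0 <= R0) by apply sqrt_pos.
  assert (Rabs x <= R0) by (apply Rabs_le; split; nra).
  assert (Rabs z <= R0) by (apply Rabs_le; split; nra).
  nra.
Qed.

Lemma kernel_arg_bounds a y x z : let s := x ^ 2 + y ^ 2 + z ^ 2 + a / 4 in
  - (Rabs a / 4) <= s /\ 2 + Rabs s <= (2 + y ^ 2 + Rabs a / 4) * exp (2 * sqrt (x ^ 2 + z ^ 2)).
Proof.
  intros s. set (R0 := sqrt (x ^ 2 + z ^ 2)).
  assert (HR0 : 0 <= R0) by apply sqrt_pos.
  assert (HR2 : R0 ^ 2 = x ^ 2 + z ^ 2) by (apply pow2_sqrt; nra).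
  pose proof (Rabs_maj2 a). pose proof (Rle_abs a). pose proof (Rabs_pos a).
  split; [unfold s; nra|].
  assert (Rabs s <= R0 ^ 2 + y ^ 2 + Rabs a / 4) by (apply Rabs_le; unfold s; nra).
  pose proof (pow_1_plus_le_exp 2 R0 HR0) as Hexp.
  replace (INR 2) with 2 in Hexp by (simpl; ring).
  eapply Rle_trans; [|apply Rmult_le_compat_l; [nra | exact Hexp]]. nra.
Qed.

Lemma Derive_n_Kker_le a y n : exists K d, 0 <= K /\ 0 <= d /\ forall x z,
  Rabs (Derive_n (fun x' => Kker a x' y z) n x) <=
    K * exp (2 * x * y * z + d * sqrt (x ^ 2 + z ^ 2)
             + - (2 / 3) * sqrt (x ^ 2 + y ^ 2 + z ^ 2 + a / 4) ^ 3).
Proof.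
  set (L := Rabs a / 4). assert (HL : 0 <= L) by (unfold L; pose proof (Rabs_pos a); lra).
  destruct (Derive_n_Kker a y n) as [P [Q [HP [HQ Hrep]]]].
  destruct (poly_xz_le_exp_norm P HP) as [CP [dP [HCP [HdP HPb]]]].
  destruct (poly_xz_le_exp_norm Q HQ) as [CQ [dQ [HCQ [HdQ HQb]]]].
  destruct (Ai_le_airy_decay L HL) as [CA [HCA HA]].
  destruct (Ai'_le_airy_decay L HL) as [CB [HCB HB]].
  set (Y := 2 + y ^ 2 + L). assert (HY : 0 <= Y) by (unfold Y; nra).
  set (d := dP + dQ + 2).
  exists (CP * CA + CQ * CB * Y), d.
  split; [apply Rplus_le_le_0_compat; repeat apply Rmult_le_pos; lra|].
  split; [unfold d; lra|]. intros x z. rewrite Hrep.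
  destruct (kernel_arg_bounds a y x z) as [Hs Hs2]. fold L Y in Hs, Hs2.
  set (R0 := sqrt (x ^ 2 + z ^ 2)) in *. set (s := x ^ 2 + y ^ 2 + z ^ 2 + a / 4) in *.
  assert (HR0 : 0 <= R0) by apply sqrt_pos.
  assert (HPs : Rabs (P x z) <= CP * exp (d * R0)).
  { eapply Rle_trans; [apply HPb|]. apply Rmult_le_compat_l; [lra|]. apply exp_le_compat.
    fold R0. unfold d. nra. }
  assert (HQs : Rabs (Q x z) * (2 + Rabs s) <= CQ * Y * exp (d * R0)).
  { apply Rle_trans with (CQ * exp (dQ * R0) * (Y * exp (2 * R0))).
    - apply Rmult_le_compat; [apply Rabs_pos | pose proof (Rabs_pos s); lra | apply HQb |].
      exact Hs2.
    - replace (CQ * exp (dQ * R0) * (Y * exp (2 * R0))) with (CQ * Y * exp (dQ * R0 + 2 * R0))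
        by (rewrite exp_plus; ring).
      apply Rmult_le_compat_l; [nra|]. apply exp_le_compat. unfold d. nra. }
  specialize (HA s Hs). specialize (HB s Hs). unfold airy_decay in HA, HB.
  set (E := exp (- (2 / 3) * sqrt s ^ 3)) in *.
  assert (HE : 0 < E) by apply exp_pos. assert (HdE : 0 < exp (d * R0)) by apply exp_pos.
  rewrite !exp_plus, Rabs_mult, (Rabs_right (exp _)) by (left; apply exp_pos). fold E.
  rewrite Rmult_assoc, (Rmult_comm (_ + _)), !Rmult_assoc.
  apply Rmult_le_compat_l; [left; apply exp_pos|].
  eapply Rle_trans; [apply Rabs_triang|]. rewrite !Rabs_mult.
  assert (Rabs (P x z) * Rabs (Ai s) <= CP * exp (d * R0) * (CA * E))
    by (apply Rmult_le_compat; [apply Rabs_pos | apply Rabs_pos | exact HPs | exact HA]).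
  assert (Rabs (Q x z) * Rabs (Ai' s) <= CB * E * (Rabs (Q x z) * (2 + Rabs s))).
  { eapply Rle_trans; [apply Rmult_le_compat_l; [apply Rabs_pos | exact HB]|].
    right. ring. }
  assert (CB * E * (Rabs (Q x z) * (2 + Rabs s)) <= CB * E * (CQ * Y * exp (d * R0)))
    by (apply Rmult_le_compat_l; [nra | exact HQs]).
  replace (exp (d * R0) * (E * (CP * CA + CQ * CB * Y)))
    with (CP * exp (d * R0) * (CA * E) + CB * E * (CQ * Y * exp (d * R0))) by ring.
  lra.
Qed.

Lemma pow3_ge_of_sqr_ge t R L : 0 <= t -> 0 <= R -> 0 <= L -> R ^ 2 - L <= t ^ 2 ->
  R ^ 3 - 2 * L * R <= t ^ 3.
Proof.
  intros Ht HR HL H.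
  destruct (Rle_dec (R ^ 2) L) as [H1|H1].
  - assert (R * (R ^ 2 - 2 * L) <= 0) by nra. assert (0 <= t ^ 3) by (apply pow_le; lra).
    replace (R ^ 3 - 2 * L * R) with (R * (R ^ 2 - 2 * L)) by ring. lra.
  - assert (HR0 : 0 < R) by nra.
    assert (HtR : R ^ 2 - L <= t * R).
    { destruct (Rle_dec (R ^ 2 - L) (t * R)) as [h|h]; [exact h|].
      assert (0 <= t * R) by nra.
      assert (t ^ 2 * R ^ 2 >= (R ^ 2 - L) * R ^ 2) by (apply Rle_ge, Rmult_le_compat_r; nra).
      nra. }
    assert (t ^ 3 * R >= (R ^ 2 - L) ^ 2).
    { replace (t ^ 3 * R) with (t ^ 2 * (t * R)) by ring.
      assert (t ^ 2 * (t * R) >= (R ^ 2 - L) * (t * R)) by (apply Rle_ge, Rmult_le_compat_r; nra).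
      assert ((R ^ 2 - L) * (t * R) >= (R ^ 2 - L) * (R ^ 2 - L))
        by (apply Rle_ge, Rmult_le_compat_l; lra).
      simpl in *. nra. }
    apply Rmult_le_reg_r with R; [exact HR0 | nra].
Qed.

Lemma exponent_le_const y L d rho : 0 < rho < 1 -> 0 <= L -> 0 <= d -> exists T, forall x z s,
  x ^ 2 + z ^ 2 - L <= s ->
  2 * x * y * z + d * sqrt (x ^ 2 + z ^ 2) + - (2 / 3) * sqrt s ^ 3
    <= T + - (2 * rho / 3) * sqrt (x ^ 2 + z ^ 2) ^ 3.
Proof.
  intros Hrho HL Hd.
  destruct (neg_cubic_bounded_above (2 / 3 * (1 - rho)) (Rabs y) (d + 4 / 3 * L)) as [T HT];
    [lra | apply Rabs_pos | lra |].
  exists T. intros x z s Hs.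
  set (R0 := sqrt (x ^ 2 + z ^ 2)).
  assert (HR0 : 0 <= R0) by apply sqrt_pos.
  assert (HR2 : R0 ^ 2 = x ^ 2 + z ^ 2) by (apply pow2_sqrt; nra).
  assert (Hxyz : 2 * x * y * z <= Rabs y * R0 ^ 2).
  { rewrite HR2.
    assert (2 * Rabs x * Rabs z <= x ^ 2 + z ^ 2)
      by (rewrite <- (pow2_abs x), <- (pow2_abs z); pose proof (pow2_ge_0 (Rabs x - Rabs z)); nra).
    assert (2 * x * y * z <= Rabs (2 * x * y * z)) by apply Rle_abs.
    rewrite !Rabs_mult, (Rabs_right 2) in H0 by lra.
    pose proof (Rabs_pos y). nra. }
  assert (Hcube : R0 ^ 3 - 2 * L * R0 <= sqrt s ^ 3).
  { apply pow3_ge_of_sqr_ge; [apply sqrt_pos | exact HR0 | exact HL|].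
    destruct (Rle_dec 0 s).
    - rewrite pow2_sqrt by assumption. lra.
    - rewrite sqrt_neg_0 by lra. lra. }
  specialize (HT R0 HR0). nra.
Qed.

Theorem lemma2 (a y : R) (n : nat) (rho : R) :
  0 < rho < 1 ->
  exists C : R, 0 < C /\
    forall x z : R,
      Rabs (Derive_n (fun x' => Kker a x' y z) n x)
        < C * exp (- (2 * rho / 3) * (sqrt (x ^ 2 + z ^ 2)) ^ 3).
Proof.
  intros Hrho.
  destruct (Derive_n_Kker_le a y n) as [K [d [HK [Hd Hbound]]]].
  destruct (exponent_le_const y (Rabs a / 4) d rho) as [T HT];
    [exact Hrho | pose proof (Rabs_pos a); lra | exact Hd |].
  exists (K * exp T + 1). split; [pose proof (exp_pos T); nra|].
  intros x z. eapply Rle_lt_trans; [apply Hbound|].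
  set (D := exp (- (2 * rho / 3) * sqrt (x ^ 2 + z ^ 2) ^ 3)).
  assert (HD : 0 < D) by apply exp_pos.
  assert (Hexp : exp (2 * x * y * z + d * sqrt (x ^ 2 + z ^ 2)
                      + - (2 / 3) * sqrt (x ^ 2 + y ^ 2 + z ^ 2 + a / 4) ^ 3) <= exp T * D).
  { unfold D. rewrite <- exp_plus. apply exp_le_compat, HT.
    pose proof (Rabs_maj2 a). nra. }
  assert (K * exp (2 * x * y * z + d * sqrt (x ^ 2 + z ^ 2)
                   + - (2 / 3) * sqrt (x ^ 2 + y ^ 2 + z ^ 2 + a / 4) ^ 3) <= K * (exp T * D))
    by (apply Rmult_le_compat_l; assumption).
  nra.
Qed.
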